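(* Fix a target task and the data below. For a source task $(\mu,f)\in\mathcal{P}(\mathcal{X}_S)\times A_S$ define its transfer risk $$\mathcal{C}(\mu,f):=\inf_{T_0^X\in\mathbb{T}_0^X,\;T_0^Y\in\mathbb{T}_0^Y} C\Big(\mathcal{E}^O\big(T_0^Y(\cdot,f(T_0^X(\cdot)))\big),\;D\big(T_0^X\#\mathrm{Law}(X_T),\mu\big)\Big).$$ Then for every fixed $f\in A_S$, the map $\mu\mapsto\mathcal{C}(\mu,f)$ is continuous on the metric space $(\mathcal{P}(\mathcal{X}_S),D)$.
   Context: $(\mathcal{X}_T,\|\cdot\|_{\mathcal{X}_T})$, $(\mathcal{Y}_T,\|\cdot\|_{\mathcal{Y}_T})$, $(\mathcal{X}_S,\|\cdot\|_{\mathcal{X}_S})$, $(\mathcal{Y}_S,\|\cdot\|_{\mathcal{Y}_S})$ are Banach spaces (target/source input and output spaces); $X_T$ is an $\mathcal{X}_T$-valued random variable (target input). $A_S$ is a set of functions $\mathcal{X}_S\to\mathcal{Y}_S$ (admissible pretrained source models) and $A_T$ a set of functions $\mathcal{X}_T\to\mathcal{Y}_T$. $\mathbb{T}_0^X$ is a nonempty set of maps $\mathcal{X}_T\to\mathcal{X}_S$ (initial input transports) and $\mathbb{T}_0^Y$ a nonempty set of maps $\mathcal{X}_T\times\mathcal{Y}_S\to\mathcal{Y}_T$ (initial output transports) such that every intermediate model $x\mapsto T_0^Y(x,f(T_0^X(x)))$ with $f\in A_S$ lies in $A_T$. $\mathcal{E}^O:A_T\to[0,\infty)$ is an output transport risk.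 $D$ is a metric on the set $\mathcal{P}(\mathcal{X}_S)$ of probability measures on $\mathcal{X}_S$; the input transport risk of $T_0^X$ for source input law $\mu$ is $D(T_0^X\#\mathrm{Law}(X_T),\mu)$, where $\#$ denotes pushforward. $C:\mathbb{R}\times\mathbb{R}\to\mathbb{R}$ satisfies $C(0,0)=0$, is non-decreasing in each argument when the other is fixed, and there is $L>0$ with $|C(a,b)-C(a',b')|\le L(|a-a'|+|b-b'|)$ for all $a,a',b,b'\ge 0$. *)

From HB Require Import structures.
From mathcomp Require Import all_boot all_order all_algebra.
From mathcomp Require Import all_classical all_reals all_analysis.
Set Implicit Arguments. Unset Strict Implicit. Unset Printing Implicit Defensive.
Import Order.TTheory GRing.Theory Num.Theory.
Import numFieldNormedType.Exports.
Local Open Scope classical_set_scope.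
Local Open Scope ring_scope.

Notation borel V := (g_sigma_algebraType (@open V)).

Notation Prob R V := (probability (borel V) R).

Definition transfer_risk (R : realType)
  (XT XS YT YS : completeNormedModType R)
  (Law : Prob R XT)
  (TX : set {mfun borel XT >-> borel XS})
  (TY : set (XT -> YS -> YT))
  (EO : (XT -> YT) -> R)
  (D : Prob R XS -> Prob R XS -> R)
  (C : R -> R -> R)
  (mu : Prob R XS) (f : XS -> YS) : R :=
  inf [set r : R | exists T0X, exists T0Y, TX T0X /\ TY T0Y /\
        r = C (EO (fun x => T0Y x (f (T0X x))))
              (D (distribution Law T0X) mu)].

(* Every admissible pair of transports gives the same output risk for all source
   laws, so the risks of (nu, f) and (mu, f) differ only through the input term
   D(T0X # Law, .), which moves by at most D(mu, nu) by the triangle inequality.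
   Lipschitz continuity of C turns this into a pairwise shift of at most
   L * D(mu, nu) between the two sets of risks, hence between their infima: the
   map mu |-> C(mu, f) is L-Lipschitz for D. *)
From HB Require Import structures.
From mathcomp Require Import all_boot all_order all_algebra.
From mathcomp Require Import all_classical all_reals all_analysis.
From mathcomp Require Import lra.
Set Implicit Arguments. Unset Strict Implicit. Unset Printing Implicit Defensive.
Import Order.TTheory GRing.Theory Num.Theory.
Import numFieldNormedType.Exports.
Local Open Scope classical_set_scope.
Local Open Scope ring_scope.

Lemma inf_le_addr (R : realType) (A B : set R) (c : R) :
  A !=set0 -> has_lbound B ->
  (forall x, A x -> exists2 y, B y & y <= x + c) ->
  inf B <= inf A + c.
Proof.
move=> A0 lbB shiftAB; rewrite -lerBlDr; apply: lb_le_inf => // x /shiftAB[y By].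
by rewrite lerBlDr; apply: le_trans; apply: ge_inf.
Qed.

Lemma ler_norm_dist_sub (R : realDomainType) (T : Type) (d : T -> T -> R) :
  (forall x y, d x y = d y x) -> (forall x y z, d x z <= d x y + d y z) ->
  forall x y z, `|d x y - d x z| <= d y z.
Proof.
move=> dC dD x y z; have := dD x y z; have := dD x z y; rewrite (dC z y).
by move=> dxy dxz; rewrite ler_norml; apply/andP; split; lra.
Qed.

Section MonotoneLipschitzCost.
Variables (R : realDomainType) (C : R -> R -> R) (L : R).
Hypotheses (C00 : C 0 0 = 0)
  (C_mono1 : forall a a' b, a <= a' -> C a b <= C a' b)
  (C_mono2 : forall a b b', b <= b' -> C a b <= C a b')
  (C_lip : forall a a' b b', 0 <= a -> 0 <= a' -> 0 <= b -> 0 <= b' ->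
     `|C a b - C a' b'| <= L * (`|a - a'| + `|b - b'|)).

Lemma cost_ge0 a b : 0 <= a -> 0 <= b -> 0 <= C a b.
Proof.
move=> a0 b0; rewrite -C00; apply: le_trans (C_mono2 0 b0) _.
exact: C_mono1.
Qed.

Lemma cost_le_lipr a b b' : 0 <= a -> 0 <= b -> 0 <= b' ->
  C a b' <= C a b + L * `|b' - b|.
Proof.
move=> a0 b0 b'0; rewrite addrC -lerBlDr.
have := C_lip a0 a0 b'0 b0; rewrite subrr normr0 add0r.
exact/le_trans/ler_norm.
Qed.

End MonotoneLipschitzCost.

Section TransferRiskLipschitz.
Variables (R : realType) (XT XS YT YS : completeNormedModType R).
Variables (Law : Prob R XT) (TX : set {mfun borel XT >-> borel XS}).
Variables (TY : set (XT -> YS -> YT)) (EO : (XT -> YT) -> R).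
Variables (D : Prob R XS -> Prob R XS -> R) (C : R -> R -> R) (L : R).
Hypothesis L_ge0 : 0 <= L.
Variable f : XS -> YS.
Hypotheses (TX_ne : TX !=set0) (TY_ne : TY !=set0)
  (EO_ge0 : forall T0X T0Y, TX T0X -> TY T0Y ->
     0 <= EO (fun x => T0Y x (f (T0X x)))).
Hypotheses (D_ge0 : forall mu nu, 0 <= D mu nu)
  (D_sym : forall mu nu, D mu nu = D nu mu)
  (D_tri : forall mu nu rho, D mu rho <= D mu nu + D nu rho).
Hypotheses (C00 : C 0 0 = 0)
  (C_mono1 : forall a a' b, a <= a' -> C a b <= C a' b)
  (C_mono2 : forall a b b', b <= b' -> C a b <= C a b')
  (C_lip : forall a a' b b', 0 <= a -> 0 <= a' -> 0 <= b -> 0 <= b' ->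
     `|C a b - C a' b'| <= L * (`|a - a'| + `|b - b'|)).

Definition transfer_risks (mu : Prob R XS) : set R :=
  [set r : R | exists T0X, exists T0Y, TX T0X /\ TY T0Y /\
    r = C (EO (fun x => T0Y x (f (T0X x)))) (D (distribution Law T0X) mu)].

Lemma transfer_risks_neq0 mu : transfer_risks mu !=set0.
Proof.
have [T0X TX0] := TX_ne; have [T0Y TY0] := TY_ne.
by eexists; exists T0X, T0Y.
Qed.

Lemma transfer_risks_lbound mu : has_lbound (transfer_risks mu).
Proof.
exists 0 => _ [T0X [T0Y [TX0 [TY0 ->]]]].
exact: cost_ge0 (EO_ge0 TX0 TY0) (D_ge0 _ _).
Qed.

Lemma transfer_risk_le_add mu nu :
  transfer_risk Law TX TY EO D C nu f
    <= transfer_risk Law TX TY EO D C mu f + L * D mu nu.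
Proof.
apply: inf_le_addr (transfer_risks_neq0 mu) (transfer_risks_lbound nu) _.
move=> _ [T0X [T0Y [TX0 [TY0 ->]]]].
exists (C (EO (fun x => T0Y x (f (T0X x)))) (D (distribution Law T0X) nu)).
  by exists T0X, T0Y.
have pi_mu := @D_ge0 (distribution Law T0X) mu.
have pi_nu := @D_ge0 (distribution Law T0X) nu.
apply: le_trans (cost_le_lipr C_lip (EO_ge0 TX0 TY0) pi_mu pi_nu) _.
by rewrite lerD2l ler_wpM2l // (@D_sym mu) (ler_norm_dist_sub D_sym D_tri).
Qed.

Lemma transfer_risk_lipschitz mu nu :
  `|transfer_risk Law TX TY EO D C nu f - transfer_risk Law TX TY EO D C mu f|
    <= L * D nu mu.
Proof.
have := transfer_risk_le_add mu nu; have := transfer_risk_le_add nu mu.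
by rewrite D_sym => le_mu le_nu; rewrite ler_norml; apply/andP; split; lra.
Qed.

End TransferRiskLipschitz.

Theorem proposition6 (R : realType)
  (XT XS YT YS : completeNormedModType R)
  (dO : measure_display) (Omega : measurableType dO) (P : probability Omega R)
  (X_T : {mfun Omega >-> borel XT})
  (AS : set (XS -> YS)) (AT : set (XT -> YT))
  (TX : set {mfun borel XT >-> borel XS})
  (TY : set (XT -> YS -> YT))
  (TX_ne : TX !=set0) (TY_ne : TY !=set0)
  (hA : forall T0X T0Y f, TX T0X -> TY T0Y -> AS f ->
          AT (fun x => T0Y x (f (T0X x))))
  (EO : (XT -> YT) -> R) (EO_ge0 : forall g, AT g -> 0 <= EO g)
  (D : Prob R XS -> Prob R XS -> R)
  (D_ge0 : forall mu nu, 0 <= D mu nu)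
  (D_sep : forall mu nu, D mu nu = 0 <-> mu = nu)
  (D_sym : forall mu nu, D mu nu = D nu mu)
  (D_tri : forall mu nu rho, D mu rho <= D mu nu + D nu rho)
  (C : R -> R -> R)
  (C00 : C 0 0 = 0)
  (C_mono1 : forall a a' b, a <= a' -> C a b <= C a' b)
  (C_mono2 : forall a b b', b <= b' -> C a b <= C a b')
  (L : R) (L_gt0 : 0 < L)
  (C_lip : forall a a' b b', 0 <= a -> 0 <= a' -> 0 <= b -> 0 <= b' ->
     `|C a b - C a' b'| <= L * (`|a - a'| + `|b - b'|)) :
  forall f, AS f ->
  forall (mu : Prob R XS) (eps : R), 0 < eps ->
  exists2 delta : R, 0 < delta &
    forall nu : Prob R XS, D nu mu < delta ->
      `|transfer_risk (distribution P X_T) TX TY EO D C nu f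
        - transfer_risk (distribution P X_T) TX TY EO D C mu f| < eps.
Proof.
move=> f Af mu eps eps_gt0; exists (eps / L); first exact: divr_gt0.
move=> nu Dnu.
have EOf_ge0 T0X T0Y : TX T0X -> TY T0Y -> 0 <= EO (fun x => T0Y x (f (T0X x))).
  by move=> TX0 TY0; apply: EO_ge0 _ (hA _ _ _ TX0 TY0 Af).
apply: le_lt_trans (transfer_risk_lipschitz _ (ltW L_gt0) TX_ne TY_ne EOf_ge0
  D_ge0 D_sym D_tri C00 C_mono1 C_mono2 C_lip mu nu) _.
by rewrite mulrC -ltr_pdivlMr.
Qed.
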